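(* Let $A$ be a superring, $S\subseteq A$ a Marshall coherent subset, and $a,b,c\in A$. Then (i) $[c]\in[a]+[b]$ in $A/_mS$ iff there is $s\in S$ such that $cs\subseteq aS+bS$; (ii) $[c]\in[a]\cdot[b]$ in $A/_mS$ iff there is $s\in S$ such that $cs\subseteq abS$.
   Context: Multivalued operations are extended to subsets by unions. A superring is a structure $(S,+,\cdot,-,0,1)$ with multivalued addition and multiplication such that $(S,+,-,0)$ is a commutative multigroup, $(S,\cdot,1)$ is a commutative multimonoid, $a\cdot0=\{0\}$, $c(a+b)\subseteq ca+cb$, and $-(ab)=(-a)b=a(-b)$ (multigroup axioms: $c\in ab\Rightarrow a\in c\,r(b)$ and $b\in r(a)c$; $b\in a\cdot1\iff a=b$; $(ab)c\subseteq a(bc)$; $ab=ba$; multimonoid: the last two and $a\in 1\cdot a$). A subset $S$ of a superring $A$ is Marshall coherent if it is multiplicative ($1\in S$, $S\cdot S\subseteq S$) and whenever $x,a\in A$ and $x\in as$ for some $s\in S$, there are $P,Q\subseteq S$ with $xP=aQ$. For $a,b\in A$, $a\sim_S b$ iff there are nonempty $X,Y\subseteq S$ with $aX=bY$; this is an equivalence relation. The Marshall quotient $A/_mS$ is the set of $\sim_S$-classes $[a]$ with: $[c]\in[a]+[b]$ iff there exist $c'\sim c$, $a'\sim a$, $b'\sim b$ with $c'\in a'+b'$; $[c]\in[a][b]$ iff there exist $c'\sim c,a'\sim a,b'\sim b$ with $c'\in a'b'$; $-[a]:=[-a]$; zero $[0]$, unit $[1]$. *)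

Set Implicit Arguments.

(* A superring.  Multivalued operations are encoded as ternary relations:
   [add a b x] means x ∈ a + b, [mul a b x] means x ∈ a · b. *)
Record superring := SuperRing {
  carrier :> Type;
  add : carrier -> carrier -> carrier -> Prop;
  mul : carrier -> carrier -> carrier -> Prop;
  neg : carrier -> carrier;
  zero : carrier;
  one : carrier;
  add_rev : forall a b c, add a b c -> add c (neg b) a /\ add (neg a) c b;
  add_zero : forall a b, add a zero b <-> a = b;
  add_assoc : forall a b c x y, add a b x -> add x c y ->
                exists z, add b c z /\ add a z y;
  add_comm : forall a b x, add a b x <-> add b a x;
  mul_assoc : forall a b c x y, mul a b x -> mul x c y ->
                exists z, mul b c z /\ mul a z y;
  mul_comm : forall a b x, mul a b x <-> mul b a x;
  mul_one : forall a, mul one a a;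
  mul_zero : forall a x, mul a zero x <-> x = zero;
  mul_distr : forall a b c x y, add a b x -> mul c x y ->
                exists u v, mul c a u /\ mul c b v /\ add u v y;
  neg_mul_l : forall a b x, (exists y, mul a b y /\ x = neg y) <-> mul (neg a) b x;
  neg_mul_r : forall a b x, mul (neg a) b x <-> mul a (neg b) x
}.

Arguments add {s}.
Arguments mul {s}.
Arguments neg {s}.
Arguments zero {s}.
Arguments one {s}.

Section Marshall.
Context {A : superring}.

Definition subset (X Y : A -> Prop) := forall x, X x -> Y x.
Definition nonempty (X : A -> Prop) := exists x, X x.

Definition mul_set (a : A) (X : A -> Prop) : A -> Prop :=
  fun y => exists x, X x /\ mul a x y.
Definition mul_sets (X Y : A -> Prop) : A -> Prop :=
  fun z => exists x y, X x /\ Y y /\ mul x y z.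
Definition add_sets (X Y : A -> Prop) : A -> Prop :=
  fun z => exists x y, X x /\ Y y /\ add x y z.

Definition set_eq (X Y : A -> Prop) := forall x, X x <-> Y x.

Definition multiplicative (S : A -> Prop) :=
  S (@one A) /\ forall s t x, S s -> S t -> mul s t x -> S x.

Definition marshall_coherent (S : A -> Prop) :=
  multiplicative S /\
  forall x a, (exists s, S s /\ mul a s x) ->
    exists P Q, subset P S /\ subset Q S /\ nonempty P /\ nonempty Q /\
                set_eq (mul_set x P) (mul_set a Q).

Definition msim (S : A -> Prop) (a b : A) :=
  exists X Y, subset X S /\ subset Y S /\ nonempty X /\ nonempty Y /\
              set_eq (mul_set a X) (mul_set b Y).

(* [c] ∈ [a] + [b] in A/_m S *)
Definition mq_add (S : A -> Prop) (a b c : A) :=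
  exists c' a' b', msim S c' c /\ msim S a' a /\ msim S b' b /\ add a' b' c'.

(* [c] ∈ [a] · [b] in A/_m S *)
Definition mq_mul (S : A -> Prop) (a b c : A) :=
  exists c' a' b', msim S c' c /\ msim S a' a /\ msim S b' b /\ mul a' b' c'.

End Marshall.


(* If [a' X = a Y] witnesses [a' ~ a]
   and [p] lies in [X], then [a' (p n) ⊆ (a' p) n ⊆ (a Y) n ⊆ a (Y n)], so
   multiplying a representative by a suitable element of [S] moves it into
   [a S].  Choosing [s := s0 p q] with [s0], [p], [q] taken from the witness
   sets of [c' ~ c], [a' ~ a], [b' ~ b] does this simultaneously for all three
   classes, giving [c s ⊆ a S + b S] (resp. [⊆ a b S]).  Conversely every
   element of [x s] with [s ∈ S] is [~]-equivalent to [x] by coherence. *)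

Section Superring.
Context {A : superring}.

Lemma add_neg_r (x : A) : add x (neg x) zero.
Proof.
  assert (Hx0 : add x zero x) by (apply add_zero; reflexivity).
  apply add_comm, (proj2 (add_rev _ _ _ _ Hx0)).
Qed.

(* [c (x + (-x)) ⊆ c x + c (-x)] and [c 0 = {0}] force [c x] to be nonempty. *)
Lemma mul_total (c x : A) : exists u, mul c x u.
Proof.
  assert (Hc0 : mul c zero zero) by (apply mul_zero; reflexivity).
  destruct (mul_distr _ _ _ _ _ _ (add_neg_r x) Hc0) as (u & v & Hu & _).
  now exists u.
Qed.

Lemma mul_assoc_r {a b c z y : A} :
  mul b c z -> mul a z y -> exists x, mul a b x /\ mul x c y.
Proof.
  intros Hz Hy. apply mul_comm in Hz. apply mul_comm in Hy.
  destruct (mul_assoc _ _ _ _ _ _ Hz Hy) as (x & Hx & Hxy).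
  exists x. split; apply mul_comm; assumption.
Qed.

Lemma mul_left_comm {a b c z y : A} :
  mul b c z -> mul a z y -> exists w, mul a c w /\ mul b w y.
Proof.
  intros Hz Hy.
  destruct (mul_assoc_r Hz Hy) as (x & Hx & Hxy).
  apply mul_comm in Hx.
  exact (mul_assoc _ _ _ _ _ _ Hx Hxy).
Qed.

Lemma mul_interchange {a b c d x z y : A} :
  mul a b x -> mul c d z -> mul x z y ->
  exists u w, mul a c u /\ mul b d w /\ mul u w y.
Proof.
  intros Hx Hz Hy.
  destruct (mul_assoc _ _ _ _ _ _ Hx Hy) as (t & Ht & Hat).
  destruct (mul_left_comm Hz Ht) as (w & Hw & Hcw).
  destruct (mul_assoc_r Hcw Hat) as (u & Hu & Huw).
  now exists u, w.
Qed.

Lemma mul_set_shift {a a' p n v u : A} {X Y : A -> Prop} :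
  set_eq (mul_set a X) (mul_set a' Y) -> X p -> mul p n v -> mul a v u ->
  exists y w, Y y /\ mul y n w /\ mul a' w u.
Proof.
  intros Heq Hp Hv Hu.
  destruct (mul_assoc_r Hv Hu) as (k & Hk & Hkn).
  destruct (proj1 (Heq k) (ex_intro _ p (conj Hp Hk))) as (y & Hy & Hyk).
  destruct (mul_assoc _ _ _ _ _ _ Hyk Hkn) as (w & Hw & Hwu).
  now exists y, w.
Qed.

Lemma subset_mul_set_singleton (c s : A) (Z : A -> Prop) :
  subset (mul_set c (fun t => t = s)) Z <-> (forall y, mul c s y -> Z y).
Proof.
  split.
  - intros Hsub y Hy. apply Hsub. now exists s.
  - intros HZ y (t & -> & Hy). now apply HZ.
Qed.

Section Quotient.
Variable S : A -> Prop.
Hypothesis S_mult : multiplicative S.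

Lemma mul_set_absorb {a a' p n v u : A} {X Y : A -> Prop} :
  subset Y S -> set_eq (mul_set a X) (mul_set a' Y) ->
  X p -> S n -> mul p n v -> mul a v u -> mul_set a' S u.
Proof.
  intros HYS Heq Hp Hn Hv Hu.
  destruct (mul_set_shift Heq Hp Hv Hu) as (y & w & Hy & Hw & Hwu).
  exists w. split; [exact (proj2 S_mult y n w (HYS y Hy) Hn Hw) | exact Hwu].
Qed.

(* The common multiplier [s := s0 r], [r ∈ p q], of the proof idea. *)
Lemma msim_scale {c c' p q : A} {X Y : A -> Prop} :
  subset X S -> subset Y S -> nonempty Y ->
  set_eq (mul_set c' X) (mul_set c Y) -> S p -> S q ->
  exists s, S s /\ forall y, mul c s y ->
    exists x m v, S x /\ mul q x m /\ mul p m v /\ mul c' v y.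
Proof.
  intros HXS HYS [s0 Hs0] Heq Hp Hq.
  destruct S_mult as [_ S_mul].
  destruct (mul_total p q) as [r Hr].
  destruct (mul_total s0 r) as [s Hs].
  exists s. split; [exact (S_mul _ _ _ (HYS s0 Hs0) (S_mul _ _ _ Hp Hq Hr) Hs) |].
  intros y Hy.
  assert (Heq' : set_eq (mul_set c Y) (mul_set c' X)) by (intros t; split; apply Heq).
  destruct (mul_set_shift Heq' Hs0 Hs Hy) as (x & v & Hx & Hv & Hyv).
  destruct (mul_left_comm Hr Hv) as (m & Hm & Hpm).
  exists x, m, v. repeat split; [exact (HXS x Hx) | apply mul_comm | |]; assumption.
Qed.

Lemma mq_add_scaled (a b c : A) :
  mq_add S a b c ->
  exists s, S s /\ forall y, mul c s y -> add_sets (mul_set a S) (mul_set b S) y.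
Proof.
  intros (c' & a' & b' & Hc & Ha & Hb & Hadd).
  destruct Hc as (X & Y & HXS & HYS & _ & HY & Heq).
  destruct Ha as (X1 & Y1 & HX1 & HY1 & [p Hp] & _ & Heq1).
  destruct Hb as (X2 & Y2 & HX2 & HY2 & [q Hq] & _ & Heq2).
  pose proof (HX1 p Hp) as HpS. pose proof (HX2 q Hq) as HqS.
  destruct (msim_scale HXS HYS HY Heq HpS HqS) as (s & Hs & Hscale).
  exists s. split; [exact Hs |].
  intros y Hy.
  destruct (Hscale y Hy) as (x & m & v & Hx & Hm & Hv & Hyv).
  destruct (mul_left_comm Hm Hv) as (n & Hn & Hqn).
  apply mul_comm in Hyv.
  destruct (mul_distr _ _ _ _ _ _ Hadd Hyv) as (u1 & u2 & Hu1 & Hu2 & Hu).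
  apply mul_comm in Hu1. apply mul_comm in Hu2.
  exists u1, u2. repeat split; [| | exact Hu].
  - exact (mul_set_absorb HY1 Heq1 Hp (proj2 S_mult _ _ _ HqS Hx Hm) Hv Hu1).
  - exact (mul_set_absorb HY2 Heq2 Hq (proj2 S_mult _ _ _ HpS Hx Hn) Hqn Hu2).
Qed.

Lemma mq_mul_scaled (a b c : A) :
  mq_mul S a b c ->
  exists s, S s /\ forall y, mul c s y -> mul_sets (fun u => mul a b u) S y.
Proof.
  intros (c' & a' & b' & Hc & Ha & Hb & Hab).
  destruct Hc as (X & Y & HXS & HYS & _ & HY & Heq).
  destruct Ha as (X1 & Y1 & HX1 & HY1 & [p Hp] & _ & Heq1).
  destruct Hb as (X2 & Y2 & HX2 & HY2 & [q Hq] & _ & Heq2).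
  destruct (msim_scale HXS HYS HY Heq (HX1 p Hp) (HX2 q Hq)) as (s & Hs & Hscale).
  exists s. split; [exact Hs |].
  intros y Hy.
  destruct (Hscale y Hy) as (x & m & v & Hx & Hm & Hv & Hyv).
  destruct (mul_interchange Hab Hv Hyv) as (k1 & k2 & Hk1 & Hk2 & Hy12).
  destruct (proj1 (Heq1 k1) (ex_intro _ p (conj Hp Hk1))) as (y1 & Hy1 & Hay1).
  destruct (mul_set_absorb HY2 Heq2 Hq Hx Hm Hk2) as (t & Ht & Hbt).
  destruct (mul_interchange Hay1 Hbt Hy12) as (j & w & Hj & Hw & Hjw).
  exists j, w. repeat split; [exact Hj | | exact Hjw].
  exact (proj2 S_mult _ _ _ (HY1 y1 Hy1) Ht Hw).
Qed.

Hypothesis S_coherent : forall x a, (exists s, S s /\ mul a s x) ->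
  exists P Q, subset P S /\ subset Q S /\ nonempty P /\ nonempty Q /\
              set_eq (mul_set x P) (mul_set a Q).

Lemma msim_mul {a s x : A} : S s -> mul a s x -> msim S x a.
Proof. intros Hs Hx. apply S_coherent. now exists s. Qed.

Lemma msim_refl (a : A) : msim S a a.
Proof.
  assert (Hone : subset (fun t => t = one) S) by (intros t ->; exact (proj1 S_mult)).
  exists (fun t => t = one), (fun t => t = one).
  repeat split; try exact Hone; try (now exists one); intros H; exact H.
Qed.

Lemma mq_add_of_scaled (a b c s : A) :
  S s -> (forall y, mul c s y -> add_sets (mul_set a S) (mul_set b S) y) ->
  mq_add S a b c.
Proof.
  intros Hs Hsub.
  destruct (mul_total c s) as [y Hy].
  destruct (Hsub y Hy) as (x & z & (t1 & Ht1 & Hx) & (t2 & Ht2 & Hz) & Hxz).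
  exists y, x, z.
  repeat split; [exact (msim_mul Hs Hy) | exact (msim_mul Ht1 Hx)
                | exact (msim_mul Ht2 Hz) | exact Hxz].
Qed.

Lemma mq_mul_of_scaled (a b c s : A) :
  S s -> (forall y, mul c s y -> mul_sets (fun u => mul a b u) S y) ->
  mq_mul S a b c.
Proof.
  intros Hs Hsub.
  destruct (mul_total c s) as [y Hy].
  destruct (Hsub y Hy) as (u & t & Hu & Ht & Hut).
  destruct (mul_assoc _ _ _ _ _ _ Hu Hut) as (z & Hz & Hy').
  exists y, a, z.
  repeat split; [exact (msim_mul Hs Hy) | exact (msim_refl a)
                | exact (msim_mul Ht Hz) | exact Hy'].
Qed.

End Quotient.
End Superring.

Theorem lemma4p4 (A : superring) (S : A -> Prop) (a b c : A) :
  marshall_coherent S ->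
  (mq_add S a b c <->
     exists s, S s /\ subset (mul_set c (fun t => t = s))
                             (add_sets (mul_set a S) (mul_set b S))) /\
  (mq_mul S a b c <->
     exists s, S s /\ subset (mul_set c (fun t => t = s))
                             (mul_sets (fun u => mul a b u) S)).
Proof.
  intros [S_mult S_coherent].
  split; split.
  - intros Hq. destruct (mq_add_scaled S S_mult a b c Hq) as (s & Hs & Hsub).
    exists s. split; [exact Hs | now apply subset_mul_set_singleton].
  - intros (s & Hs & Hsub).
    apply (mq_add_of_scaled S S_coherent a b c s Hs), subset_mul_set_singleton, Hsub.
  - intros Hq. destruct (mq_mul_scaled S S_mult a b c Hq) as (s & Hs & Hsub).
    exists s. split; [exact Hs | now apply subset_mul_set_singleton].
  - intros (s & Hs & Hsub).
    apply (mq_mul_of_scaled S S_mult S_coherent a b c s Hs), subset_mul_set_singleton, Hsub.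
Qed.
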